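(* In the pBeeGees protocol (setting described in the context), for every view $v$, at most one block of view $v$ can collect a quorum certificate (of any of the four vote types).
   Context: Setting (pBeeGees). There are $n=3f+1$ processes, at most $f$ of which are Byzantine (they may deviate arbitrarily but cannot forge signatures or message digests); the others are correct. The protocol proceeds in views $v=1,2,\dots$, each with a designated leader $l_v$. Blocks carry a view number $B.v$, a parent block, and a quorum certificate. A vote for a block $B$ is cast in view $B.v$ and has one of four types: normal, prud, eqvc, or (prud,eqvc). A quorum certificate (QC) for a block $B$ consists of $n-f$ votes of the same type for $B$ from distinct processes; a block ''collects'' a QC if such a QC for it exists. A correct process votes at most once per view. *)

From mathcomp Require Import all_boot.
Set Implicit Arguments. Unset Strict Implicit. Unset Printing Implicit Defensive.

Inductive vote_type := Normal | Prud | Eqvc | PrudEqvc.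

(* [voted p B t] : a vote of type [t] for block [B], signed by process [p],
   exists (it is cast in view [view B]).  Since signatures cannot be forged,
   a vote attributed to a correct process was really cast by it. *)

Definition collects_QC (n f : nat) (Block : Type)
    (voted : 'I_n -> Block -> vote_type -> Prop) (B : Block) : Prop :=
  exists (t : vote_type) (Q : {set 'I_n}),
    #|Q| = n - f /\ forall p, p \in Q -> voted p B t.

Definition votes_once_per_view (n : nat) (Block : Type) (view : Block -> nat)
    (voted : 'I_n -> Block -> vote_type -> Prop) (p : 'I_n) : Prop :=
  forall B1 B2 t1 t2, voted p B1 t1 -> voted p B2 t2 ->
    view B1 = view B2 -> B1 = B2 /\ t1 = t2.

From mathcomp Require Import all_boot.
From mathcomp Require Import zify.
Set Implicit Arguments. Unset Strict Implicit. Unset Printing Implicit Defensive.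

(* Two quorums of n - f = 2f + 1 processes out of n = 3f + 1 share at least
   f + 1 processes, hence a correct one; that process voted for both blocks in
   the same view, so by voting at most once per view the blocks coincide. *)

Lemma leq_cardsUI (T : finType) (A B : {set T}) :
  #|A| + #|B| <= #|A :&: B| + #|T|.
Proof. by rewrite -cardsUI addnC leq_add2l max_card. Qed.

Lemma card_ltn_notsub (T : finType) (A B : {set T}) :
  #|B| < #|A| -> exists2 x, x \in A & x \notin B.
Proof.
move=> ltBA; apply/subsetPn; apply: contraTN ltBA => /subset_leq_card.
by rewrite leqNgt.
Qed.

Lemma quorum_intersection (T : finType) (Q1 Q2 B : {set T}) :
  #|T| + #|B| < #|Q1| + #|Q2| -> exists2 x, x \in Q1 :&: Q2 & x \notin B.
Proof.
move=> large_quorums; apply: card_ltn_notsub.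
by have := leq_cardsUI Q1 Q2; lia.
Qed.

Theorem lemma1 (f n : nat) (Hn : n = 3 * f + 1)
  (byz : {set 'I_n}) (Hbyz : #|byz| <= f)
  (Block : Type) (view : Block -> nat)
  (voted : 'I_n -> Block -> vote_type -> Prop)
  (Hcorrect : forall p, p \notin byz -> votes_once_per_view view voted p)
  (v : nat) (B1 B2 : Block) :
  view B1 = v -> view B2 = v ->
  collects_QC f voted B1 -> collects_QC f voted B2 -> B1 = B2.
Proof.
move=> viewB1 viewB2 [t1 [Q1 [cardQ1 votes1]]] [t2 [Q2 [cardQ2 votes2]]].
have [p] : exists2 p, p \in Q1 :&: Q2 & p \notin byz.
  by apply: quorum_intersection; rewrite card_ord; lia.
rewrite inE => /andP[inQ1 inQ2] correct.
have [] // := Hcorrect p correct B1 B2 t1 t2 (votes1 p inQ1) (votes2 p inQ2).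
by rewrite viewB1 viewB2.
Qed.
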